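(* For every integer $m\ge1$, $$\beta(m;t,q)=L_m(1-q-tq,\,-tq^2).$$
   Context: For an integer $m\ge1$ and $0\le d\le m-1$ let $\rho(m;t,d)=\frac{m}{m-d}\sum_{i=0}^{d}\binom{m-1-d+i}{i}\binom{m-1-i}{d-i}t^i$, and let $\rho(m;t,m)=1+t^m$. Define $\beta(m;t,q)=\sum_{d=0}^{m}\rho(m;t,d)(-q)^d$. The Lucas polynomials are $L_0(x,s)=2$ and, for $m\ge1$, $L_m(x,s)=\sum_{i=0}^{\lfloor m/2\rfloor}\binom{m-i}{i}\frac{m}{m-i}s^ix^{m-2i}$. *)

From mathcomp Require Import all_boot all_order all_algebra.
Set Implicit Arguments. Unset Strict Implicit. Unset Printing Implicit Defensive.
Import Order.TTheory GRing.Theory Num.Theory.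
Local Open Scope ring_scope.

Definition rho {R : numFieldType} (m : nat) (t : R) (d : nat) : R :=
  if d == m then 1 + t ^+ m
  else (m%:R / (m - d)%:R) *
       \sum_(0 <= i < d.+1)
          ('C(m.-1 - d + i, i))%:R * ('C(m.-1 - i, d - i))%:R * t ^+ i.

Definition beta {R : numFieldType} (m : nat) (t q : R) : R :=
  \sum_(0 <= d < m.+1) rho m t d * (- q) ^+ d.

Definition lucas {R : numFieldType} (m : nat) (x s : R) : R :=
  if m == 0%N then 2
  else \sum_(0 <= i < (m./2).+1)
          ('C(m - i, i))%:R * (m%:R / (m - i)%:R) * s ^+ i * x ^+ (m - i.*2).

From mathcomp Require Import all_boot all_order all_algebra.
From mathcomp Require Import zify ring.
Import GRing.Theory Num.Theory.

(* Put x = -tq and y = -q, so that 1 - q - tq = 1 + x + y and -tq^2 = -xy.  The polynomials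
   S_n(x, y) = sum_(i, j) C(n-j, i) C(n-i, j) x^i y^j satisfy S_0 = 1, S_1 = 1 + x + y and,
   by a four-term Pascal rule for products of binomials, S_(n+2) = (1 + x + y) S_(n+1) - xy S_n.
   This is the recurrence of the Fibonacci polynomials U_n(X, s) = sum_k C(n-k, k) X^(n-2k) s^k,
   so S_n = U_n(1 + x + y, -xy).  Comparing coefficients by the absorption identities for
   binomials, beta(m) = S_m - xy S_(m-2) and L_m = U_m + s U_(m-2) for m >= 2. *)

Definition binom2 (n i j : nat) : nat := 'C(n - j, i) * 'C(n - i, j).

Lemma binom2E e i j {n} : n = e + i + j -> binom2 n i j = 'C(e + i, i) * 'C(e + j, j).
Proof. by move->; rewrite /binom2; congr ('C(_, _) * 'C(_, _)); lia. Qed.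

Lemma binom2_boundary n i j : n <= i + j -> binom2 n i j = (i + j == n).
Proof.
rewrite leq_eqVlt => /orP[/eqP-> | lt_n]; first by rewrite eqxx (@binom2E 0) ?binn; lia.
rewrite gtn_eqF // /binom2; have [le_jn | lt_nj] := leqP j n.
  by rewrite [X in X * _]bin_small //; lia.
by rewrite [X in _ * X]bin_small ?muln0 //; lia.
Qed.

Lemma bin_addS e i : 'C(e.+1 + i.+1, i.+1) = 'C(e + i.+1, i.+1) + 'C(e.+1 + i, i).
Proof. by rewrite addnS binS addSnnS. Qed.

Lemma binom2_rec n i j :
  binom2 n.+2 i.+1 j.+1 + binom2 n i j =
  binom2 n.+1 i.+1 j.+1 + binom2 n.+1 i j.+1 + binom2 n.+1 i.+1 j.
Proof.
have [lt_n | le_n] := ltnP n (i + j).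
  rewrite !binom2_boundary //; lia.
have [e def_n] : exists e, n = e + i + j by exists (n - (i + j)); lia.
rewrite (binom2E e i j def_n) (@binom2E e i.+1 j.+1 n.+2 ltac:(lia))
  (@binom2E e i j.+1 n.+1 ltac:(lia)) (@binom2E e i.+1 j n.+1 ltac:(lia)).
case: e def_n => [|e] def_n.
  by rewrite binom2_boundary ?add0n ?binn; lia.
by rewrite (@binom2E e i.+1 j.+1 n.+1 ltac:(lia)) !bin_addS; ring.
Qed.

Lemma binom2n0 n i : binom2 n i 0 = 'C(n, i).
Proof. by rewrite /binom2 subn0 bin0 muln1. Qed.

Lemma binom20n n j : binom2 n 0 j = 'C(n, j).
Proof. by rewrite /binom2 subn0 bin0 mul1n. Qed.

Local Open Scope ring_scope.

Lemma sum_antidiagonal (V : nmodType) N (F : nat -> nat -> V) :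
  (forall i j, (N <= i + j)%N -> F i j = 0) ->
  \sum_(0 <= i < N) \sum_(0 <= j < N) F i j =
  \sum_(0 <= d < N) \sum_(0 <= i < d.+1) F i (d - i)%N.
Proof.
move=> F0; symmetry.
transitivity (\sum_(0 <= d < N) \sum_(0 <= i < N) if (i <= d)%N then F i (d - i)%N else 0).
  apply: eq_big_nat => d /andP[_ lt_dN].
  by rewrite (big_nat_widen _ _ _ _ _ lt_dN) big_mkcond.
rewrite exchange_big_nat; apply: eq_big_nat => i /andP[_ lt_iN].
rewrite -big_mkcond (big_cat_nat (leq0n i) (ltnW lt_iN)) /= big1_seq => [|d]; last first.
  move=> /andP[le_id]; rewrite mem_index_iota => /andP[_ lt_di].
  by have := leq_ltn_trans le_id lt_di; rewrite ltnn.
rewrite /= add0r -{1}(add0n i) big_addn.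
rewrite (big_cat_nat (leq0n (N - i)) (leq_subr i N)) /= [X in _ = _ + X]big1_seq ?addr0 => [|j].
  by apply: eq_big => [j | j _]; rewrite ?leq_addl ?addnK.
by move=> /andP[_]; rewrite mem_index_iota => /andP[le_j _]; apply: F0; lia.
Qed.

Section Fibonacci.
Variable R : comNzRingType.
Implicit Types (x y : R) (f : nat -> nat -> R).

Lemma coef_poly2 N f i j : (forall i j, (N <= i + j)%N -> f i j = 0) ->
  (\poly_(i < N) \poly_(j < N) f i j)`_i`_j = f i j.
Proof.
move=> f0; rewrite coef_poly; case: ltnP => [_ | le_Ni]; last by rewrite coef0 f0 //; lia.
by rewrite coef_poly; case: ltnP => // le_Nj; rewrite f0 //; lia.
Qed.

Lemma horner2_poly N f x y :
  (\poly_(i < N) \poly_(j < N) f i j).[x, y] =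
  \sum_(0 <= i < N) \sum_(0 <= j < N) f i j * x ^+ i * y ^+ j.
Proof.
rewrite horner_poly horner_sum big_mkord; apply: eq_bigr => i _.
rewrite hornerM -(rmorphXn polyC) hornerC horner_poly mulr_suml big_mkord; apply: eq_bigr => j _.
by rewrite mulrAC.
Qed.

Definition fib_poly x n : {poly R} := \poly_(k < n.+1) ('C(n - k, k)%:R * x ^+ (n - k.*2)).

Lemma coef_fib_poly x n k : (fib_poly x n)`_k = 'C(n - k, k)%:R * x ^+ (n - k.*2).
Proof. by rewrite coef_poly; case: ltnP => // lt_nk; rewrite bin_small ?mul0r //; lia. Qed.

Lemma fib_poly_rec x n : fib_poly x n.+2 = x%:P * fib_poly x n.+1 + 'X * fib_poly x n.
Proof.
apply/polyP => -[|k]; rewrite coefD coefCM coefXM /= !coef_fib_poly.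
  by rewrite !subn0 !bin0 !mul1r addr0 exprS.
have [lt_nk | le_kn] := ltnP n k; first by rewrite !bin_small ?(mulr0, mul0r, addr0) //; lia.
rewrite !doubleS !subSS subSn // binS natrD mulrDl; congr (_ + _).
have [lt_2k | le_n2k] := ltnP k.*2 n; first by rewrite mulrCA -exprS subnSK.
by rewrite bin_small ?mul0r ?mulr0 //; rewrite -addnn in le_n2k; lia.
Qed.

Lemma fib_poly0 x : fib_poly x 0 = 1.
Proof.
by apply/polyP => -[|k]; rewrite coef_fib_poly coef1 ?bin0 ?mulr1 // sub0n bin_small ?mul0r.
Qed.

Lemma fib_poly1 x : fib_poly x 1 = x%:P.
Proof.
apply/polyP => -[|k]; rewrite coef_fib_poly coefC /=; first by rewrite bin0 mul1r expr1.
by rewrite bin_small ?mul0r.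
Qed.

Definition binom2_poly n : {poly {poly R}} :=
  \poly_(i < n.+1) \poly_(j < n.+1) (binom2 n i j)%:R.

Lemma coef_binom2_poly n i j : (binom2_poly n)`_i`_j = (binom2 n i j)%:R.
Proof. by rewrite coef_poly2 // => i' j' lt_n; rewrite binom2_boundary ?(ltnW lt_n) // gtn_eqF. Qed.

Lemma binom2_poly_rec n :
  binom2_poly n.+2 = (1 + 'X + 'Y) * binom2_poly n.+1 - 'X * 'Y * binom2_poly n.
Proof.
apply/polyP => i; apply/polyP => j.
rewrite -mulrA !(mulrDl, coefB, coefD) mul1r coefXM coefCM coefXM coefXM.
case: i => [|i]; case: j => [|j]; rewrite /= ?coefCM ?coefXM /= ?coef0 !coef_binom2_poly.
- by rewrite !binom2n0 !bin0 !addr0 subr0.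
- by rewrite !binom20n binS natrD addr0 subr0.
- by rewrite !binom2n0 binS natrD addr0 subr0.
- by rewrite -!natrD -binom2_rec natrD addrK.
Qed.

Lemma binom2_poly0 : binom2_poly 0 = 1.
Proof.
apply/polyP => i; apply/polyP => j; rewrite coef_binom2_poly binom2_boundary // coef1.
by case: i => [|i]; rewrite ?coef0 ?coef1.
Qed.

Lemma binom2_poly1 : binom2_poly 1 = 1 + 'X + 'Y.
Proof.
apply/polyP => i; apply/polyP => j; rewrite coef_binom2_poly !coefD coef1 coefX coefC.
case: i => [|[|i]]; case: j => [|[|j]]; rewrite /= ?coef0 ?coef1 ?coefX.
  by rewrite binom2n0 bin0 !addr0.
all: by rewrite binom2_boundary ?(addr0, add0r).
Qed.

Lemma binom2_poly_fib x y n : (binom2_poly n).[x, y] = (fib_poly (1 + x + y) n).[- (x * y)].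
Proof.
suff [] : (binom2_poly n).[x, y] = (fib_poly (1 + x + y) n).[- (x * y)] /\
          (binom2_poly n.+1).[x, y] = (fib_poly (1 + x + y) n.+1).[- (x * y)] by [].
elim: n => [|n [IHn IHn1]].
  by rewrite binom2_poly0 binom2_poly1 fib_poly0 fib_poly1 !hornerE.
split=> //; rewrite binom2_poly_rec fib_poly_rec.
rewrite !(hornerD, hornerN, hornerM) IHn IHn1 !hornerE.
ring.
Qed.
End Fibonacci.

Arguments binom2_poly {R} n.
Arguments fib_poly {R}.

Section LucasBeta.
Variable R : numFieldType.

Lemma bin_prod_absorb e i j :
  (e.+1 + i + j)%:R / e.+1%:R * ('C(e + i, i) * 'C(e + j, j))%:R =
  ('C(e.+1 + i, i) * 'C(e.+1 + j, j))%:R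
    - (if (0 < i)%N && (0 < j)%N then 'C(e + i, i.-1) * 'C(e + j, j.-1) else 0)%N%:R :> R.
Proof.
have e1_neq0 : e.+1%:R != 0 :> R by rewrite pnatr_eq0.
have up n : 'C(e.+1 + n, n)%:R = (e.+1 + n)%:R / e.+1%:R * 'C(e + n, n)%:R :> R.
  by rewrite mulrAC -natrM mul_bin_down addnK natrM mulrAC divff // mul1r.
have down n : 'C(e + n.+1, n)%:R = n.+1%:R / e.+1%:R * 'C(e + n.+1, n.+1)%:R :> R.
  by rewrite mulrAC -natrM mul_bin_left addnS subSn ?leq_addl // addnK natrM mulrAC divff // mul1r.
have -> : (if (0 < i)%N && (0 < j)%N then 'C(e + i, i.-1) * 'C(e + j, j.-1) else 0)%N%:R =
          i%:R * j%:R / e.+1%:R ^+ 2 * ('C(e + i, i) * 'C(e + j, j))%:R :> R.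
  case: i => [|i]; case: j => [|j]; rewrite ?(mul0r, mulr0) //= !natrM !down.
  by field; rewrite addrC natr1.
by rewrite !natrM up up !natrD; field; rewrite addrC natr1.
Qed.

(* The coefficient of x^i y^j in beta(m; t, q), with x = -tq and y = -q: for i + j = d < m it
   is the i-th summand of rho(m; t, d), and the top term (1 + t^m) (-q)^m gives x^m + y^m. *)
Definition beta_coef m i j : R :=
  if (i + j < m)%N then m%:R / (m - (i + j))%N%:R * (binom2 m.-1 i j)%:R
  else ((i + j == m) && (i * j == 0))%N%:R.

Lemma beta_coefE k i j : beta_coef k.+2 i j =
  (binom2 k.+2 i j)%:R - (if (0 < i)%N && (0 < j)%N then binom2 k i.-1 j.-1 else 0)%N%:R.
Proof.
rewrite /beta_coef; case: ltnP => [lt_ij_k2 | le_k2_ij].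
  have [e def_k] : exists e, k.+2 = e.+1 + i + j by exists (k.+1 - (i + j))%N; lia.
  rewrite (binom2E e.+1 i j def_k) (@binom2E e i j k.+1 ltac:(lia)) def_k.
  have -> : (e.+1 + i + j - (i + j) = e.+1)%N by lia.
  rewrite bin_prod_absorb; congr (_ - _%:R).
  case: i {lt_ij_k2} def_k => [|i]; case: j => [|j] //= def_k.
  by rewrite (@binom2E e.+1 i j k ltac:(lia)) !addSnnS.
rewrite binom2_boundary //.
case: i j le_k2_ij => [|i] [|j] le_k2_ij; rewrite ?(add0n, addn0, mul0n, muln0, andbT, subr0) //.
rewrite muln_eq0 andbF binom2_boundary ?addSn ?addnS ?eqSS ?subrr //; lia.
Qed.

Definition beta_poly m : {poly {poly R}} := \poly_(i < m.+1) \poly_(j < m.+1) beta_coef m i j.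

Lemma beta_coef_eq0 m i j : (m < i + j)%N -> beta_coef m i j = 0.
Proof. by move=> lt_m; rewrite /beta_coef ltnNge ltnW //= gtn_eqF. Qed.

Lemma coef_beta_poly m i j : (beta_poly m)`_i`_j = beta_coef m i j.
Proof. by rewrite coef_poly2 // => i' j' /beta_coef_eq0. Qed.

Lemma beta_poly_binom2 k : beta_poly k.+2 = binom2_poly k.+2 - 'X * 'Y * binom2_poly k.
Proof.
apply/polyP => i; apply/polyP => j.
rewrite coef_beta_poly beta_coefE -mulrA coefB coefB coefXM.
by case: i => [|i]; case: j => [|j]; rewrite /= ?coef0 ?coefCM ?coefXM ?coef_binom2_poly.
Qed.

Lemma beta_horner2 m t q : (0 < m)%N -> beta m t q = (beta_poly m).[t * - q, - q].
Proof.
move=> m_gt0; rewrite horner2_poly sum_antidiagonal => [|i j /beta_coef_eq0->]; last first.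
  by rewrite !mul0r.
apply: eq_big_nat => d /andP[_]; rewrite ltnS leq_eqVlt => /orP[/eqP-> | lt_dm].
  case: m m_gt0 => // m _; rewrite /rho eqxx big_nat_recr //= big_nat_recl //.
  rewrite big1_seq => [|i /andP[_]].
    rewrite /beta_coef subn0 subnn add0n addn0 ltnn !eqxx muln0 /= !exprMn !expr0.
    by rewrite mulrDl !mul1r mulr1 addr0.
  rewrite mem_index_iota => /andP[_ lt_im].
  rewrite /beta_coef subSS (_ : i.+1 + (m - i) = m.+1)%N; last lia.
  by rewrite ltnn eqxx /= muln_eq0 subn_eq0 leqNgt lt_im /= !mul0r.
rewrite /rho ltn_eqF // !mulr_sumr mulr_suml.
apply: eq_big_nat => i /andP[_]; rewrite ltnS => le_id.
rewrite /beta_coef subnKC // lt_dm /binom2 (_ : m.-1 - (d - i) = m.-1 - d + i)%N; last lia.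
have -> : (- q) ^+ d = (- q) ^+ i * (- q) ^+ (d - i) by rewrite -exprD subnKC.
by rewrite exprMn natrM; ring.
Qed.

Implicit Types x s : R.

Definition lucas_poly x m : {poly R} :=
  \poly_(i < m.+1) ('C(m - i, i)%:R * (m%:R / (m - i)%:R) * x ^+ (m - i.*2)).

Lemma lucas_horner m x s : (0 < m)%N -> lucas m x s = (lucas_poly x m).[s].
Proof.
move=> m_gt0; rewrite /lucas gtn_eqF // horner_poly (big_nat_widen _ _ m.+1); last first.
  by rewrite ltnS leq_half_double -addnn; lia.
rewrite big_mkcond big_mkord /=; apply: eq_bigr => i _.
case: ltnP => [_ | lt_m2i]; first by rewrite mulrAC.
rewrite ltn_half_double -addnn in lt_m2i.
by rewrite bin_small ?mul0r //; lia.
Qed.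

Lemma lucas_poly_fib x k : lucas_poly x k.+2 = fib_poly x k.+2 + 'X * fib_poly x k.
Proof.
apply/polyP => i; rewrite coefD coefXM; case: i => [|i] /=; rewrite coef_poly !coef_fib_poly.
  by rewrite !subn0 bin0 divff ?pnatr_eq0 // mulr1 addr0.
rewrite ltnS; have [le_ik | lt_ki] := leqP i k; last first.
  by rewrite !bin_small ?(mul0r, add0r) ?if_same //; lia.
have r_neq0 : (k - i).+1%:R != 0 :> R by rewrite pnatr_eq0.
have bin_down : 'C(k - i, i)%:R = i.+1%:R / (k - i).+1%:R * 'C((k - i).+1, i.+1)%:R :> R.
  by rewrite mulrAC -natrM -mul_bin_diag natrM mulrAC divff // mul1r.
rewrite ifT; last lia.
rewrite subSS subSn // doubleS !subSS bin_down (_ : k.+2 = (k - i).+1 + i.+1)%N; last lia.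
by rewrite natrD; field; rewrite addrC natr1.
Qed.
End LucasBeta.

Theorem lemma2p2 (R : numFieldType) (m : nat) (t q : R) :
  (1 <= m)%N -> beta m t q = lucas m (1 - q - t * q) (- t * q ^+ 2).
Proof.
case: m => [//|[|k]] _.
  rewrite /beta /lucas /rho /= big_nat_recr //= !big_nat1 /=.
  by rewrite !subn0 addn0 !bin0 !expr0 !expr1 !divr1; ring.
rewrite beta_horner2 // beta_poly_binom2 lucas_horner // lucas_poly_fib.
rewrite (_ : 1 - q - t * q = 1 + t * - q + - q); last by ring.
rewrite (_ : - t * q ^+ 2 = - (t * - q * - q)); last by ring.
by rewrite !(hornerD, hornerN, hornerM, hornerX, hornerC) !binom2_poly_fib; ring.
Qed.
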